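(* Let $f:\Sigma\to O$ be a social choice function. (i) If $f$ is pseudomonotone, then for every $\varepsilon>0$ there is a lex-truthful randomized mechanism that $\varepsilon$-implements $f$. (ii) Conversely, if for some $\varepsilon<\frac12$ there is a lex-truthful randomized mechanism that $\varepsilon$-implements $f$, then $f$ is pseudomonotone.
   Context: Setting: a set $N$ of $n$ agents, a finite set $O$ of $m$ outcomes, and for each agent $j$ a set $\Sigma_j$ of allowed strict total orders on $O$; $\Sigma=\prod_j\Sigma_j$. For a strict order $\succ$, $\succ(\ell)$ is its $\ell$-th ranked outcome and $\mathrm{pos}_\succ(o)$ the position of $o$; $a\succeq b$ means $a\succ b$ or $a=b$. A social choice function is a map $f:\Sigma\to O$. $f$ is pseudomonotone if for every agent $j$, every $\succ_{-j}$, and all $\succ_j,\succ'_j\in\Sigma_j$, setting $o=f(\succ_j,\succ_{-j})$ and $o'=f(\succ'_j,\succ_{-j})$, either $o\succeq_j o'$, or there is an outcome $o''$ with $o''\succ_j o'$ and $\mathrm{pos}_{\succ_j}(o'')<\mathrm{pos}_{\succ'_j}(o'')$. A randomized mechanism maps profiles to probability distributions over $O$; it $\varepsilon$-implements $f$ if $\Pr[\mathcal{M}(\succ)=f(\succ)]\ge1-\varepsilon$ for all $\succ\in\Sigma$. For lotteries $p\ne q$, $p$ lexicographically dominates $q$ w.r.t. $\succ$ if there is $i$ with $p(\succ(i))>q(\succ(i))$ and $p(\succ(\ell))=q(\succ(\ell))$ for all $\ell<i$. $\mathcal{M}$ is lex-truthful if for all $j$, $\succ_j,\succ'_j\in\Sigma_j$,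 $\succ_{-j}$: either $\mathcal{M}(\succ_j,\succ_{-j})=\mathcal{M}(\succ'_j,\succ_{-j})$ (as distributions) or $\mathcal{M}(\succ_j,\succ_{-j})$ lexicographically dominates $\mathcal{M}(\succ'_j,\succ_{-j})$ w.r.t. $\succ_j$. *)

From HB Require Import structures.
From mathcomp Require Import all_boot all_order all_algebra all_fingroup.
From mathcomp Require Import reals.
Set Implicit Arguments. Unset Strict Implicit. Unset Printing Implicit Defensive.
Import Order.TTheory GRing.Theory Num.Theory.
Local Open Scope ring_scope.

(* Conventions.
   - Agents N = 'I_n, outcomes O = 'I_m.
   - A strict total order on O is encoded by a permutation s : {perm 'I_m}
     giving the (0-based) position of each outcome: pos_s(o) = s o.
     Thus a \succ_s b  iff  s a < s b, and the l-th ranked outcome is s^-1 l.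
   - A profile is a finite function from agents to orders; the domain Sigma is
     the set of profiles P with P j \in S j for every agent j.
   - A social choice function / mechanism is a total function on all profiles;
     only its values on Sigma matter (all conditions quantify over Sigma). *)

Definition order_ (m : nat) := {perm 'I_m}.
Definition profile (n m : nat) := {ffun 'I_n -> {perm 'I_m}}.

Definition ranked m (s : {perm 'I_m}) (l : 'I_m) : 'I_m := (s^-1)%g l.
Definition pos m (s : {perm 'I_m}) (o : 'I_m) : nat := s o.
Definition succ m (s : {perm 'I_m}) (o1 o2 : 'I_m) : bool := (pos s o1 < pos s o2)%N.
Definition succeq m (s : {perm 'I_m}) (o1 o2 : 'I_m) : bool := succ s o1 o2 || (o1 == o2).

Definition upd n m (P : profile n m) (j : 'I_n) (s : {perm 'I_m}) : profile n m :=
  [ffun k => if k == j then s else P k].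

Definition in_Sigma n m (S : 'I_n -> {set {perm 'I_m}}) (P : profile n m) : Prop :=
  forall j, P j \in S j.

Definition in_Sigma_minus n m (S : 'I_n -> {set {perm 'I_m}}) (j : 'I_n)
  (P : profile n m) : Prop :=
  forall k, k != j -> P k \in S k.

Definition pseudomonotone n m (S : 'I_n -> {set {perm 'I_m}})
  (f : profile n m -> 'I_m) : Prop :=
  forall (j : 'I_n) (P : profile n m) (s s' : {perm 'I_m}),
    in_Sigma_minus S j P -> s \in S j -> s' \in S j ->
    let o := f (upd P j s) in
    let o' := f (upd P j s') in
    succeq s o o' \/
    exists o'' : 'I_m, succ s o'' o' /\ (pos s o'' < pos s' o'')%N.

Definition lottery (R : realType) m := 'I_m -> R.
Definition is_distr (R : realType) m (p : 'I_m -> R) : Prop :=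
  (forall o, 0 <= p o) /\ \sum_(o < m) p o = 1.

Definition lex_dom (R : realType) m (s : {perm 'I_m}) (p q : 'I_m -> R) : Prop :=
  p <> q /\
  exists i : 'I_m, q (ranked s i) < p (ranked s i) /\
    forall l : 'I_m, (l < i)%N -> p (ranked s l) = q (ranked s l).

Definition is_mechanism (R : realType) n m (S : 'I_n -> {set {perm 'I_m}})
  (M : profile n m -> 'I_m -> R) : Prop :=
  forall P, in_Sigma S P -> is_distr (M P).

Definition eps_implements (R : realType) n m (S : 'I_n -> {set {perm 'I_m}})
  (M : profile n m -> 'I_m -> R) (f : profile n m -> 'I_m) (eps : R) : Prop :=
  forall P, in_Sigma S P -> 1 - eps <= M P (f P).

Definition lex_truthful (R : realType) n m (S : 'I_n -> {set {perm 'I_m}})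
  (M : profile n m -> 'I_m -> R) : Prop :=
  forall (j : 'I_n) (s s' : {perm 'I_m}) (P : profile n m),
    s \in S j -> s' \in S j -> in_Sigma_minus S j P ->
    M (upd P j s) = M (upd P j s') \/ lex_dom s (M (upd P j s)) (M (upd P j s')).

From mathcomp Require Import all_boot all_order all_algebra all_fingroup.
From mathcomp Require Import reals.
From mathcomp Require Import ring lra.
Set Implicit Arguments. Unset Strict Implicit. Unset Printing Implicit Defensive.
Import Order.TTheory GRing.Theory Num.Theory.
Local Open Scope ring_scope.

(* (ii) Suppose pseudomonotonicity fails at s, s' with o = f(s) <> f(s') = o'.
   Then s' demotes no outcome that s ranks above o', so s and s' list the same
   outcomes above o'.  Lex-truthfulness in both directions forces the two
   lotteries to coincide on these outcomes and then to give o' at least as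
   much probability under s as under s'; but o' gets at most eps < 1/2 under
   s and at least 1 - eps > 1/2 under s'.
   (i) Put a mass A close to 1 on f(P) and spread a small mass d times the
   Borda scores of P, with d m < A.  Along the order s, the lottery first
   changes under a misreport s' either at the highest outcome that s'
   demotes, where the Borda part strictly loses, or at f(s), where the point
   mass A dominates; pseudomonotonicity keeps f(s') below one of the two. *)

Definition agree_upto m (s s' : {perm 'I_m}) (t : nat) : Prop :=
  forall l : 'I_m, (l < t)%N -> ranked s l = ranked s' l.

Lemma agree_uptoP m (s s' : {perm 'I_m}) t :
  agree_upto s s' t <-> forall c, (s c < t)%N -> s' c = s c.
Proof.
split=> [agr c lt_ct | fix_top l lt_lt].
  by have := agr (s c) lt_ct; rewrite /ranked permK => E; rewrite {1}E permKV.
have fix_l : s' ((s^-1)%g l) = l by rewrite fix_top permKV.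
by rewrite /ranked -{2}fix_l permK.
Qed.

Lemma agree_upto_of_le m (s s' : {perm 'I_m}) t :
  (forall c, (s c < t)%N -> (s' c <= s c)%N) -> agree_upto s s' t.
Proof.
move=> le_top; apply/agree_uptoP.
suff fix_pos k c : (s c : nat) = k -> (s c < t)%N -> s' c = s c by move=> c; apply: fix_pos.
elim/ltn_ind: k c => k IH c sc_k lt_ct.
have := le_top c lt_ct; rewrite leq_eqVlt => /orP[/eqP eq_c | lt_s'c]; first exact: val_inj.
pose y := (s^-1)%g (s' c).
have sy : s y = s' c by rewrite /y permKV.
have s'y : s' y = s y.
  by apply: (IH (s y)); rewrite // sy; [rewrite -sc_k | exact: ltn_trans lt_ct].
have yc : y = c by apply: (@perm_inj _ s'); rewrite s'y sy.
by move: lt_s'c; rewrite -sy yc ltnn.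
Qed.

Lemma first_disagreement m (s s' : {perm 'I_m}) : s != s' ->
  exists t0 : 'I_m, agree_upto s s' t0 /\ (t0 < s' (ranked s t0))%N.
Proof.
move=> neq.
have [t ne_t] : exists t, ranked s t != ranked s' t.
  apply/existsP; apply: contraR neq => /existsPn same; apply/eqP.
  have inv_eq : (s^-1 = s'^-1)%g by apply/permP => t; apply/eqP/negPn/same.
  by rewrite -[s]invgK inv_eq invgK.
have [t0 ne_t0 min_t0] := arg_minnP (P := fun t => ranked s t != ranked s' t) val ne_t.
have agr : agree_upto s s' t0.
  by move=> l lt_l; apply/eqP; apply: contraTT lt_l => /min_t0; rewrite -leqNgt.
exists t0; split=> //.
set c0 := ranked s t0.
have sc0 : s c0 = t0 by rewrite /c0 /ranked permKV.
case: (ltngtP t0 (s' c0)) => // [lt_s' | /val_inj eq_s'].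
  have := agr _ lt_s'; rewrite [ranked s' _]/ranked permK => eq_r.
  have : s (ranked s (s' c0)) = s' c0 by rewrite /ranked permKV.
  by rewrite eq_r sc0 => eq_t0; move: lt_s'; rewrite -eq_t0 ltnn.
by move: ne_t0; rewrite -/c0 eq_s' /ranked permK eqxx.
Qed.

Lemma rank_below_of_pseudomonotone_clause m (s s' : {perm 'I_m}) t (o o' : 'I_m) :
  agree_upto s s' t -> o != o' ->
  succeq s o o' \/ (exists o'', succ s o'' o' /\ (pos s o'' < pos s' o'')%N) ->
  (s o < s o')%N \/ (t < s o')%N.
Proof.
move=> /agree_uptoP agr neq [|[o'' [above moved]]].
  by rewrite /succeq (negbTE neq) orbF; left.
right; apply: leq_ltn_trans above; rewrite leqNgt; apply/negP => /agr fixed.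
by move: moved; rewrite /pos fixed ltnn.
Qed.

Section Lotteries.
Variable R : realType.

Lemma is_distr_pair_le1 m (p : 'I_m -> R) (o o' : 'I_m) :
  is_distr p -> o != o' -> p o + p o' <= 1.
Proof.
move=> [p_ge0 <-] neq; rewrite (bigD1 o) //= (bigD1 o') 1?eq_sym //= addrA lerDl.
exact: sumr_ge0.
Qed.

Lemma lex_domI m (s : {perm 'I_m}) (p q : 'I_m -> R) (i : 'I_m) :
  q (ranked s i) < p (ranked s i) ->
  (forall l : 'I_m, (l < i)%N -> p (ranked s l) = q (ranked s l)) -> lex_dom s p q.
Proof. by move=> lt_i eq_above; split; [move=> pq; move: lt_i; rewrite pq ltxx | exists i]. Qed.

Lemma lex_dom_ge m (s : {perm 'I_m}) (p q : 'I_m -> R) (k : 'I_m) :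
  lex_dom s p q ->
  (forall l : 'I_m, (l < k)%N -> p (ranked s l) = q (ranked s l)) ->
  q (ranked s k) <= p (ranked s k).
Proof.
move=> [_ [i [lt_i eq_above]]] eq_k.
case: (ltngtP i k) => [ik | ki | /val_inj <-]; last exact: ltW.
  by move: lt_i; rewrite eq_k // ltxx.
by rewrite eq_above.
Qed.

Lemma lex_dom_agree_upto m (s s' : {perm 'I_m}) (p q : 'I_m -> R) t :
  agree_upto s s' t -> lex_dom s p q -> lex_dom s' q p ->
  forall l : 'I_m, (l < t)%N -> p (ranked s l) = q (ranked s l).
Proof.
move=> + pq qp; elim: t => [//|t IH] agr l.
have agr_t : agree_upto s s' t by move=> l' lt_l'; apply: agr; exact: ltnW.
rewrite ltnS leq_eqVlt => /orP[/eqP l_t | ]; last exact: IH.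
have eq_above (l' : 'I_m) : (l' < l)%N -> p (ranked s l') = q (ranked s l').
  by rewrite l_t; exact: IH.
apply/le_anti/andP; split; last exact: lex_dom_ge.
rewrite agr ?l_t //; apply: (lex_dom_ge qp) => l' lt_l'.
by rewrite -agr ?eq_above // (ltn_trans lt_l') // l_t.
Qed.

Lemma pseudomonotone_of_lex_truthful n m (S : 'I_n -> {set {perm 'I_m}})
    (f : profile n m -> 'I_m) (eps : R) (M : profile n m -> 'I_m -> R) :
  eps < 1 / 2 -> is_mechanism S M -> lex_truthful S M -> eps_implements S M f eps ->
  pseudomonotone S f.
Proof.
move=> eps_lt mechM truthM implM j P s s' HP Hs Hs' /=.
have in_S t : t \in S j -> in_Sigma S (upd P j t).
  by move=> Ht k; rewrite /upd ffunE; case: eqP => [-> | /eqP]; [| exact: HP].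
set o := f (upd P j s); set o' := f (upd P j s').
have [eq_oo' | neq] := eqVneq o o'; first by left; rewrite /succeq eq_oo' eqxx orbT.
right; case: (boolP [exists o'', succ s o'' o' && (pos s o'' < pos s' o'')%N]).
  by move=> /existsP [o'' /andP demoted]; exists o''.
move=> /existsPn no_demotion; exfalso.
set p := M (upd P j s); set q := M (upd P j s').
have lt_o' : p o' < q o'.
  have := is_distr_pair_le1 (mechM _ (in_S _ Hs)) neq.
  have := implM _ (in_S _ Hs); have := implM _ (in_S _ Hs'); rewrite -/o -/o' -/p -/q.
  lra.
have agr : agree_upto s s' (s o').
  apply: agree_upto_of_le => c lt_c; rewrite leqNgt.
  by have := no_demotion c; rewrite /succ /pos lt_c.
have [eq_pq | pq] := truthM j s s' P Hs Hs' HP.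
  by move: lt_o'; rewrite /p /q eq_pq ltxx.
have [eq_qp | qp] := truthM j s' s P Hs' Hs HP.
  by move: lt_o'; rewrite /p /q eq_qp ltxx.
have := lex_dom_ge pq (lex_dom_agree_upto agr pq qp).
by rewrite /ranked permK -/p -/q; lra.
Qed.

Definition borda_score n m (P : profile n m) (c : 'I_m) : R :=
  \sum_(k < n) (m%:R - (P k c)%:R).

Definition borda_mech n m (f : profile n m -> 'I_m) (A d : R)
    (P : profile n m) (c : 'I_m) : R :=
  (if c == f P then A else 0) + d * borda_score P c.

Lemma borda_score_ge0 n m (P : profile n m) c : 0 <= borda_score P c.
Proof. by apply: sumr_ge0 => k _; rewrite subr_ge0 ler_nat ltnW. Qed.

Lemma sum_borda_score n m (P : profile n m) :
  \sum_c borda_score P c = n%:R * \sum_(c < m) (m%:R - c%:R).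
Proof.
rewrite /borda_score exchange_big /= (eq_bigr (fun _ => \sum_(c < m) (m%:R - c%:R))).
  by rewrite sumr_const card_ord mulr_natl.
by move=> k _; rewrite [RHS](reindex_inj (@perm_inj _ (P k))).
Qed.

Lemma borda_score_upd n m (P : profile n m) j (s s' : {perm 'I_m}) c :
  borda_score (upd P j s) c - borda_score (upd P j s') c = (s' c)%:R - (s c)%:R.
Proof.
rewrite /borda_score (bigD1 j) // [X in _ - X](bigD1 j) //= !ffunE eqxx.
rewrite (eq_bigr (fun k => m%:R - (upd P j s' k c)%:R)); first by ring.
by move=> k ne_k; rewrite !ffunE (negbTE ne_k).
Qed.

Lemma borda_mech_lex_truthful n m (S : 'I_n -> {set {perm 'I_m}})
    (f : profile n m -> 'I_m) (A d : R) :
  pseudomonotone S f -> 0 < d -> d * m%:R < A -> lex_truthful S (borda_mech f A d).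
Proof.
move=> pm d_gt0 dm_lt_A j s s' P Hs Hs' HP.
have [-> | neq] := eqVneq s s'; [by left | right].
set o := f (upd P j s); set o' := f (upd P j s').
pose D c := borda_mech f A d (upd P j s) c - borda_mech f A d (upd P j s') c.
have D_def c : D c = (if c == o then A else 0) - (if c == o' then A else 0)
                     + d * ((s' c)%:R - (s c)%:R).
  by rewrite /D /borda_mech -/o -/o' -(borda_score_upd P j s s' c); ring.
suff [i D_i D_above] : exists2 i : 'I_m, 0 < D (ranked s i) &
    forall l : 'I_m, (l < i)%N -> D (ranked s l) = 0.
  apply: (lex_domI (i := i)) => [|l /D_above /eqP]; first by rewrite -subr_gt0.
  by rewrite subr_eq0 => /eqP.
have [t0 [agr t0_demoted]] := first_disagreement neq.
have s_ranked l : s (ranked s l) = l by rewrite /ranked permKV.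
have ranked_neq (l c : 'I_m) : (l < s c)%N -> (ranked s l == c) = false.
  by move=> lt_l; apply/eqP => eq_c; move: lt_l; rewrite -eq_c s_ranked ltnn.
have D_above (l : 'I_m) : (l < t0)%N -> (ranked s l == o) = (ranked s l == o') ->
    D (ranked s l) = 0.
  move=> lt_l same; move/agree_uptoP: agr => /(_ (ranked s l)).
  rewrite s_ranked => /(_ lt_l) s'_l.
  by rewrite D_def same s'_l s_ranked; case: ifP; rewrite !subrr mulr0 addr0.
have D_t0 : (ranked s t0 == o) = (ranked s t0 == o') -> 0 < D (ranked s t0).
  move=> same; rewrite D_def same subrr add0r mulr_gt0 // subr_gt0 ltr_nat.
  by rewrite s_ranked.
have [eq_oo' | neq_oo'] := eqVneq o o'.
  by exists t0 => [|l lt_l]; [apply: D_t0 | apply: D_above]; rewrite ?eq_oo'.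
have := rank_below_of_pseudomonotone_clause agr neq_oo' (pm j P s s' HP Hs Hs').
case: (ltnP t0 (s o)) => [lt_t0 | le_so] o'_low.
  have lt_t0' : (t0 < s o')%N by case: o'_low => // /(ltn_trans lt_t0).
  exists t0 => [|l lt_l]; first by apply: D_t0; rewrite !ranked_neq.
  by apply: D_above; rewrite // !ranked_neq // (ltn_trans lt_l).
have lt_oo' : (s o < s o')%N by case: o'_low => // /(leq_ltn_trans le_so).
exists (s o) => [|l lt_l].
  have d_so : d * (s o)%:R <= d * m%:R.
    by rewrite ler_pM2l // ler_nat ltnW.
  have d_s'o : 0 <= d * (s' o)%:R := mulr_ge0 (ltW d_gt0) (ler0n _ _).
  rewrite /ranked permK D_def eqxx (negbTE neq_oo') subr0; lra.
by apply: D_above; rewrite ?(leq_trans lt_l) // !ranked_neq // (ltn_trans lt_l).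
Qed.

Lemma pseudomonotone_implementable n m (S : 'I_n -> {set {perm 'I_m}})
    (f : profile n m -> 'I_m) (eps : R) :
  pseudomonotone S f -> 0 < eps ->
  exists M, is_mechanism S M /\ lex_truthful S M /\ eps_implements S M f eps.
Proof.
move=> pm eps_gt0.
pose X : R := n%:R * \sum_(c < m) (m%:R - c%:R).
have X_ge0 : 0 <= X.
  by rewrite mulr_ge0 // sumr_ge0 // => c _; rewrite subr_ge0 ler_nat ltnW.
have m_ge0 : 0 <= m%:R :> R by [].
pose e := Num.min eps 1.
have e_gt0 : 0 < e by rewrite lt_min eps_gt0 ltr01.
have e_le_eps : e <= eps by rewrite ge_min lexx.
have e_le1 : e <= 1 by rewrite ge_min lexx orbT.
have den_gt0 : 0 < 1 + X + m%:R by lra.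
pose d := e / (1 + X + m%:R).
have d_gt0 : 0 < d := divr_gt0 e_gt0 den_gt0.
have d_total : d + d * X + d * m%:R = e.
  by rewrite -[RHS](divfK (lt0r_neq0 den_gt0)) -/d; ring.
have dm_ge0 : 0 <= d * m%:R := mulr_ge0 (ltW d_gt0) m_ge0.
exists (borda_mech f (1 - d * X) d); split; [|split].
- move=> P _; split=> [c|].
    apply: addr_ge0; last exact: mulr_ge0 (ltW d_gt0) (borda_score_ge0 P c).
    by case: ifP => _ //; lra.
  rewrite /borda_mech big_split /= -mulr_sumr sum_borda_score -/X.
  by rewrite (bigD1 (f P)) //= eqxx big1 => [|c /negbTE -> //]; ring.
- by apply: borda_mech_lex_truthful => //; lra.
- move=> P _; rewrite /borda_mech eqxx.
  have := mulr_ge0 (ltW d_gt0) (borda_score_ge0 P (f P)); lra.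
Qed.

End Lotteries.

Theorem theorem4 (R : realType) (n m : nat) (S : 'I_n -> {set {perm 'I_m}})
  (f : profile n m -> 'I_m) :
  (pseudomonotone S f ->
     forall eps : R, 0 < eps ->
       exists M : profile n m -> 'I_m -> R,
         is_mechanism S M /\ lex_truthful S M /\ eps_implements S M f eps)
  /\
  ((exists (eps : R) (M : profile n m -> 'I_m -> R),
      eps < 1 / 2 /\ is_mechanism S M /\ lex_truthful S M /\ eps_implements S M f eps)
   -> pseudomonotone S f).
Proof.
split=> [pm eps eps_gt0 | [eps [M [eps_lt [mechM [truthM implM]]]]]].
  exact: pseudomonotone_implementable.
exact: pseudomonotone_of_lex_truthful eps_lt mechM truthM implM.
Qed.
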